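(* Let $n\ge2$ and let $\mathsf{T}$ be a string of length $n$ over $\{\mathtt{a},\mathtt{b}\}$ ($\mathtt{a}<\mathtt{b}$) whose suffix array $P=[p_1,\ldots,p_n]$ is an arithmetically progressed permutation with ratio $k$, with $P\neq[n,n-1,\ldots,1]$ and $p_1\neq k+1$. Then $\mathsf{T}$ is a balanced word.
   Context: Lexicographic order with a proper prefix smaller than the longer string; suffix array: permutation of $[1..n]$ such that $\mathsf{T}[\mathsf{SA}_{\mathsf{T}}[i]..n]$ is the $i$-th smallest suffix. $x\bmod n$: representative in $[1..n]$. An arithmetically progressed permutation of length $n$ with ratio $k\in[1..n-1]$ is a permutation $P$ of $[1..n]$ with $P[i+1]=P[i]+k\bmod n$. A binary string $\mathsf{T}$ is balanced if for every character $c\in\{\mathtt{a},\mathtt{b}\}$ and all pairs of equal-length factors $\mathsf{U},\mathsf{V}$ of the infinite periodic string $\mathsf{T}\mathsf{T}\mathsf{T}\cdots$, the numbers of occurrences of $c$ in $\mathsf{U}$ and in $\mathsf{V}$ differ by at most one. *)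

(* Strings over {a,b} are [seq bool] with a = false, b = true
   (so the letter order a < b is false < true). Positions are 1-indexed. *)
From mathcomp Require Import all_boot.
Set Implicit Arguments. Unset Strict Implicit. Unset Printing Implicit Defensive.

Fixpoint lexlt (s t : seq bool) : bool :=
  match s, t with
  | [::], [::] => false
  | [::], _ :: _ => true
  | _ :: _, [::] => false
  | x :: s', y :: t' => (~~ x && y) || ((x == y) && lexlt s' t')
  end.

Definition suffix (T : seq bool) (i : nat) : seq bool := drop i.-1 T.

Definition is_suffix_array (T : seq bool) (P : seq nat) : Prop :=
  perm_eq P (iota 1 (size T)) /\
  pairwise (fun p q => lexlt (suffix T p) (suffix T q)) P.

(* x mod n with representative in [1..n]. *)
Definition modn1 (x n : nat) : nat := ((x + n - 1) %% n).+1.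

Definition is_AP_perm (n k : nat) (P : seq nat) : Prop :=
  perm_eq P (iota 1 n) /\ 1 <= k <= n - 1 /\
  forall i, i.+1 < n -> nth 0 P i.+1 = modn1 (nth 0 P i + k) n.

(* Factor of length m starting at (0-indexed) position i of TTT... *)
Definition inf_factor (T : seq bool) (i m : nat) : seq bool :=
  mkseq (fun j => nth false T ((i + j) %% size T)) m.

Definition balanced (T : seq bool) : Prop :=
  forall (c : bool) (i j m : nat),
    count_mem c (inf_factor T i m) <= (count_mem c (inf_factor T j m)).+1.

From Pilot Require Import Defs.
From mathcomp Require Import all_boot.
From mathcomp Require Import zify.

Set Implicit Arguments.
Unset Strict Implicit.
Unset Printing Implicit Defensive.

(* Write the suffix array as P[i] = pos i + 1 with
   pos i = (p0 + i k) mod n (ranks i are 0-indexed), and let d be the rank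
   of the suffix starting right after the smallest one; then d k = 1 (mod n),
   so dropping the first letter of the rank-i suffix gives the suffix of rank
   (i + d) mod n, except for the one-letter suffix T[n], of rank last_rank.
   Since the suffixes are sorted, the letter starting the rank-i suffix is
   nondecreasing in i, and two suffixes beginning with the same letter keep
   their order after that letter is removed.  Combining these facts with the
   two excluded cases (P reversed, P[0] = k+1) shows that the rank-i suffix
   starts with b exactly when i >= n - d.  Hence T[q] = b iff
   (s + q d) mod n >= n - d for a fixed s: T is a rotation word, and
   rotation words are balanced because the number of b's in a factor of
   length m of TTT... is floor(m d / n) or floor(m d / n) + 1. *)

Definition rotation_word (n d s : nat) : seq bool :=
  mkseq (fun q => n - d <= (s + q * d) %% n) n.

Lemma modn_sum_lt x y n : x < n -> y < n -> (x + y) %% n = if x + y < n then x + y else x + y - n.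
Proof.
move=> xn yn; case: ltnP => H; first by rewrite modn_small.
by rewrite -{1}(subnK H) modnDr modn_small //; lia.
Qed.

Lemma div_step u d n : d < n -> (u + d) %/ n = u %/ n + (n - d <= u %% n).
Proof.
move=> dn; have n0 : 0 < n by lia.
rewrite divnD // (divn_small dn) (modn_small dn) addn0.
congr addn.
by rewrite leq_subLR addnC.
Qed.

(* The b's in a factor of a rotation word count the multiples of n crossed
   by the orbit s + i d, s + (i+1) d, ..., s + (i+m) d. *)
Lemma count_rotation n d s i m : d < n ->
  count_mem true (inf_factor (rotation_word n d s) i m)
  = (s + i * d + m * d) %/ n - (s + i * d) %/ n.
Proof.
move=> dn; elim: m => [|m IH]; first by rewrite addn0 subnn.
have n0 : 0 < n by lia.
rewrite /inf_factor mkseqS -cats1 count_cat -/(inf_factor _ i m) IH /=.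
rewrite size_mkseq nth_mkseq ?ltn_mod // eqb_id addn0.
rewrite -modnDmr modnMml modnDmr mulnDl addnA.
rewrite mulSn (addnC d) addnA (div_step _ dn).
have : (s + i * d) %/ n <= (s + i * d + m * d) %/ n by apply: leq_div2r; lia.
lia.
Qed.

Lemma count_rotation_split n d s i m : d < n ->
  count_mem true (inf_factor (rotation_word n d s) i m)
  = (m * d) %/ n + (n <= (s + i * d) %% n + (m * d) %% n).
Proof.
move=> dn; rewrite count_rotation // divnD; last lia.
by rewrite -addnA addKn.
Qed.

Lemma count_bool (s : seq bool) : count_mem false s + count_mem true s = size s.
Proof. by elim: s => [|[] s IH] //=; rewrite -IH ?add0n ?add1n ?addnS ?addSn. Qed.

Lemma rotation_word_balanced n d s : d < n -> balanced (rotation_word n d s).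
Proof.
move=> dn c i j m.
have size_factor l : size (inf_factor (rotation_word n d s) l m) = m by rewrite size_mkseq.
have := count_bool (inf_factor (rotation_word n d s) i m).
have := count_bool (inf_factor (rotation_word n d s) j m).
rewrite !size_factor.
have := leq_b1 (n <= (s + i * d) %% n + (m * d) %% n).
have := leq_b1 (n <= (s + j * d) %% n + (m * d) %% n).
case: c; rewrite !count_rotation_split //; lia.
Qed.

Lemma lexlt_irr s : lexlt s s = false.
Proof. by elim: s => [|x s IH] //=; rewrite eqxx IH andNb andbF. Qed.

Lemma lexlt_asym s t : lexlt s t -> lexlt t s = false.
Proof. by elim: s t => [|x s IH] [|y t] //=; case: x; case: y => //= /IH. Qed.

Lemma lexlt_head x y s t : lexlt (x :: s) (y :: t) -> x <= y.
Proof. by case: x; case: y. Qed.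

Lemma lexlt_cons x s t : lexlt (x :: s) (x :: t) = lexlt s t.
Proof. by case: x. Qed.

Section APSuffixArray.

Variables (n k : nat) (T : seq bool) (P : seq nat).
Hypothesis n_ge2 : 2 <= n.
Hypothesis size_T : size T = n.
Hypothesis SA : is_suffix_array T P.
Hypothesis AP : is_AP_perm n k P.

Lemma n_gt0 : 0 < n.
Proof. exact: ltnW n_ge2. Qed.

Lemma size_P : size P = n.
Proof. by case: AP => /perm_size ->; rewrite size_iota. Qed.

Lemma uniq_P : uniq P.
Proof. by case: AP => /perm_uniq ->; rewrite iota_uniq. Qed.

Lemma mem_P q : (q \in P) = (0 < q <= n).
Proof. by case: AP => /perm_mem ->; rewrite mem_iota add1n ltnS. Qed.

Lemma P0_range : 0 < nth 0 P 0 <= n.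
Proof. by rewrite -mem_P mem_nth // size_P; lia. Qed.

Definition p0 : nat := (nth 0 P 0).-1.

Lemma p0_lt : p0 < n.
Proof. by have := P0_range; rewrite /p0; lia. Qed.

Definition pos (i : nat) : nat := (p0 + i * k) %% n.

Lemma pos_lt i : pos i < n.
Proof. by rewrite ltn_mod; lia. Qed.

Lemma nth_P i : i < n -> nth 0 P i = (pos i).+1.
Proof.
case: AP => _ [_ APk]; elim: i => [|i IH] Hi.
  by rewrite /pos mul0n addn0 modn_small ?p0_lt // /p0; have := P0_range; lia.
rewrite APk ?IH /Defs.modn1; try lia.
have -> : (pos i).+1 + k + n - 1 = pos i + k + n by lia.
by rewrite modnDr /pos modnDml mulSn [k + _]addnC addnA.
Qed.

Lemma pos_inj i j : i < n -> j < n -> pos i = pos j -> i = j.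
Proof.
move=> Hi Hj E; apply/eqP.
by rewrite -(nth_uniq 0 _ _ uniq_P) ?size_P // !nth_P // E.
Qed.

Definition rank (q : nat) : nat := index q.+1 P.

Lemma rank_lt q : q < n -> rank q < n.
Proof. by move=> Hq; rewrite /rank -size_P index_mem mem_P. Qed.

Lemma pos_rank q : q < n -> pos (rank q) = q.
Proof.
move=> Hq; have := nth_P (rank_lt Hq).
by rewrite nth_index ?mem_P //; case.
Qed.

(* Rank of the suffix following the smallest one; d k = 1 (mod n). *)
Definition d : nat := rank ((p0 + 1) %% n).

Lemma d_lt : d < n.
Proof. by rewrite rank_lt // ltn_mod n_gt0. Qed.

Lemma pos_d : pos d = (p0 + 1) %% n.
Proof. by rewrite pos_rank // ltn_mod n_gt0. Qed.

(* d = 0 would force p0 = p0 + 1 mod n, impossible for n >= 2. *)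
Lemma d_gt0 : 0 < d.
Proof.
rewrite lt0n; apply/negP => /eqP d0; move: pos_d.
rewrite d0 /pos mul0n addn0 (modn_small p0_lt).
have := p0_lt; case: (ltnP (p0 + 1) n) => H1 H2.
  by rewrite modn_small //; lia.
have -> : p0 + 1 = n by lia.
by rewrite modnn; lia.
Qed.

Lemma pos_shift i : pos ((i + d) %% n) = (pos i + 1) %% n.
Proof.
have pos_dk : (p0 + d * k) %% n = (p0 + 1) %% n := pos_d.
rewrite /pos -modnDmr modnMml modnDmr mulnDl addnCA -modnDmr pos_dk.
by rewrite modnDmr modnDml; congr (_ %% n); lia.
Qed.

Lemma pos_sorted i j : i < j -> j < n -> lexlt (drop (pos i) T) (drop (pos j) T).
Proof.
move=> ij jn; case: SA => _ /(pairwiseP 0) /(_ i j).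
rewrite !inE size_P => /(_ (ltn_trans ij jn) jn ij).
by rewrite /suffix !nth_P // (ltn_trans ij jn).
Qed.

Lemma pos_sorted_inv i j : i < n -> j < n ->
  lexlt (drop (pos i) T) (drop (pos j) T) -> i < j.
Proof.
move=> Hi Hj lt_ij; case: (ltngtP i j) => // [ji|ij]; last by rewrite ij lexlt_irr in lt_ij.
by have := pos_sorted ji Hi; rewrite (lexlt_asym lt_ij).
Qed.

Definition letter (i : nat) : bool := nth false T (pos i).

Lemma drop_pos i : drop (pos i) T = letter i :: drop (pos i).+1 T.
Proof. by rewrite (drop_nth false) // size_T pos_lt. Qed.

Lemma letter_mono i j : i <= j -> j < n -> letter i <= letter j.
Proof.
rewrite leq_eqVlt => /orP[/eqP -> //|ij] jn.
by have := pos_sorted ij jn; rewrite !drop_pos => /lexlt_head.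
Qed.

Definition last_rank : nat := rank n.-1.

Lemma last_rank_lt : last_rank < n.
Proof. by apply: rank_lt; lia. Qed.

Lemma pos_last_rank : pos last_rank = n.-1.
Proof. by apply: pos_rank; lia. Qed.

Lemma pos_lt_last i : i < n -> i != last_rank -> (pos i).+1 < n.
Proof.
move=> Hi il; have := pos_lt i.
have : pos i != n.-1.
  by apply: contra il => /eqP E; apply/eqP/pos_inj; rewrite ?pos_last_rank ?last_rank_lt.
lia.
Qed.

(* Two suffixes with the same first letter keep their order once it is
   removed; removal turns rank i into rank (i + d) mod n. *)
Lemma letter_shift i j : i < j -> j < n -> i != last_rank -> j != last_rank ->
  letter i = letter j -> (i + d) %% n < (j + d) %% n.
Proof.
move=> ij jn il jl eq_ij; have iln := ltn_trans ij jn.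
apply: pos_sorted_inv; rewrite ?ltn_mod ?n_gt0 //.
rewrite !pos_shift !modn_small ?addn1 ?pos_lt_last //.
by have := pos_sorted ij jn; rewrite !drop_pos eq_ij lexlt_cons.
Qed.

(* T[n] is a proper prefix, hence smaller than every other suffix starting
   with the same letter. *)
Lemma last_rank_min i : i < n -> i != last_rank ->
  letter i = letter last_rank -> last_rank < i.
Proof.
move=> Hi il eq_il; apply: (pos_sorted_inv last_rank_lt Hi).
rewrite pos_last_rank (drop_nth false) ?size_T; last lia.
rewrite drop_oversize ?size_T; last lia.
rewrite drop_pos eq_il /letter pos_last_rank lexlt_cons.
by rewrite (drop_nth false) // size_T pos_lt_last.
Qed.

Lemma no_straddle i j : i < j -> j < n -> i != last_rank -> j != last_rank ->
  letter i = letter j -> (n - d <= i) || (j < n - d).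
Proof.
move=> ij jn il jl eq_ij; have := letter_shift ij jn il jl eq_ij.
have iln := ltn_trans ij jn.
by rewrite !modn_sum_lt ?d_lt //; case: ifP; case: ifP; lia.
Qed.

Lemma pos_mod i : pos (i %% n) = pos i.
Proof. by rewrite /pos -modnDmr modnMml modnDmr. Qed.

Lemma pos_shift_iter i q : pos ((i + q * d) %% n) = (pos i + q) %% n.
Proof.
elim: q => [|q IH]; first by rewrite !addn0 pos_mod modn_mod.
have -> : i + q.+1 * d = (i + q * d) + d by rewrite mulSnr addnA.
by rewrite -modnDml pos_shift IH modnDml -addnA addn1.
Qed.

Hypothesis P0_neq : nth 0 P 0 <> k.+1.

(* Since P[0] <> k + 1, the largest suffix is not the whole text. *)
Lemma pos_max_neq0 : pos n.-1 != 0.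
Proof.
apply/eqP => pos0; apply: P0_neq; case: AP => _ [k_range _].
have : (pos n.-1 + k) %% n = k %% n by rewrite pos0.
rewrite /pos modnDml -addnA -mulSnr prednK ?n_gt0 // (mulnC n) addnC modnMDl.
rewrite (modn_small p0_lt) modn_small /p0; have := P0_range; lia.
Qed.

Hypothesis P_not_rev : P <> rev (iota 1 n).

(* d = n - 1 together with last_rank = 0 forces P = [n, n-1, ..., 1]. *)
Lemma pos_reversed : d = n.-1 -> last_rank = 0 -> forall i, i < n -> pos i = n.-1 - i.
Proof.
move=> dE l0; elim=> [|i IH] Hi; first by rewrite subn0 -l0 pos_last_rank.
have := pos_shift i.+1; rewrite dE modn_sum_lt; try lia.
rewrite ifF; last lia.
have -> : i.+1 + n.-1 - n = i by lia.
rewrite IH; last lia.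
by rewrite modn_sum_lt ?pos_lt //; have := pos_lt i.+1; case: ifP; lia.
Qed.

Lemma not_reversed : d = n.-1 -> last_rank = 0 -> False.
Proof.
move=> dE l0; apply: P_not_rev; apply: (@eq_from_nth _ 0).
  by rewrite size_P size_rev size_iota.
move=> i; rewrite size_P => Hi.
rewrite nth_P // nth_rev ?size_iota // nth_iota; last lia.
by rewrite (pos_reversed dE l0) //; lia.
Qed.

(* If T ends with b, the suffixes starting with b are exactly those of rank
   at least last_rank, and last_rank = n - d. *)
Lemma threshold_last_b : letter last_rank -> forall i, i < n -> letter i = (n - d <= i).
Proof.
move=> last_b.
have b_above i : last_rank <= i -> i < n -> letter i.
  by move=> li Hi; have := letter_mono li Hi; rewrite last_b; case: (letter i).
have a_below i : i < last_rank -> letter i = false.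
  move=> il; case li: (letter i) => //.
  have := last_rank_min (ltn_trans il last_rank_lt) (negbT (ltn_eqF il)).
  by rewrite li last_b ltnNge ltnW // => /(_ erefl).
have b_high i : last_rank < i -> i < n -> n - d <= i.
  move=> li Hi; have := d_gt0; case: (ltnP i n.-1) => iN; last lia.
  have /orP[] // : (n - d <= i) || (n.-1 < n - d); last lia.
  by apply: no_straddle; rewrite ?b_above //; lia.
have a_low : last_rank <= n - d.
  rewrite leqNgt; apply/negP => dl; have dn := d_lt; have d0 := d_gt0.
  have /orP[] : (n - d <= 0) || (n - d < n - d); try lia.
  by apply: no_straddle; rewrite ?a_below //; lia.
have last_eq : last_rank = n - d.
  apply/eqP; rewrite eqn_leq a_low leqNgt; apply/negP => ld.
  have sum : last_rank + d = n.-1 by have := b_high last_rank.+1 (ltnSn _); lia.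
  have := pos_shift last_rank; rewrite sum pos_last_rank (modn_small (_ : n.-1 < n)); last lia.
  rewrite addn1 prednK ?n_gt0 // modnn => pos0.
  by move: pos_max_neq0; rewrite pos0.
move=> i Hi; case: (ltnP i last_rank) => [il|li]; first by rewrite a_below //; lia.
by rewrite b_above //; apply/esym; rewrite -last_eq.
Qed.

(* If T ends with a, then T[n] = a is the smallest suffix, and the no-straddle
   property pins the b-suffixes to the ranks at least n - d. *)
Lemma threshold_last_a : ~~ letter last_rank -> forall i, i < n -> letter i = (n - d <= i).
Proof.
move=> /negbTE last_a; have dn := d_lt; have d0 := d_gt0.
have last0 : last_rank = 0.
  apply/eqP; rewrite -leqn0 leqNgt; apply/negP => l0.
  have a0 : letter 0 = false.
    by have := letter_mono (ltnW l0) last_rank_lt; rewrite last_a; case: (letter 0).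
  by have := last_rank_min n_gt0 (negbT (ltn_eqF l0)); rewrite a0 last_a => /(_ erefl).
have b_high i : i < n -> letter i -> n - d <= i.
  move=> Hi bi; case: (ltnP i n.-1) => iN; last lia.
  have i0 : i != 0 by apply: contraTneq bi => ->; rewrite -last0 last_a.
  have bN : letter n.-1.
    have := @letter_mono i n.-1 (ltnW iN) ltac:(lia).
    by rewrite bi; case: (letter n.-1).
  have /orP[] : (n - d <= i) || (n.-1 < n - d); try lia.
  by apply: no_straddle; rewrite ?last0 ?bi ?bN //; lia.
have a_low i : i < n -> letter i = false -> i < n - d.
  move=> Hi ai; rewrite ltnNge; apply/negP => di.
  have dN : d < n.-1.
    by rewrite ltn_neqAle -ltnS prednK ?dn ?n_gt0 // andbT; apply/eqP => /not_reversed; apply.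
  have a1 : letter 1 = false.
    by have := @letter_mono 1 i ltac:(lia) Hi; rewrite ai; case: (letter 1).
  have /orP[] : (n - d <= 1) || (i < n - d); try lia.
  by apply: no_straddle; rewrite ?last0 ?a1 ?ai //; lia.
move=> i Hi; case: (boolP (letter i)) => [bi|/negbTE ai].
  by rewrite b_high.
by apply/esym/negbTE; rewrite -ltnNge a_low.
Qed.

Lemma letter_threshold i : i < n -> letter i = (n - d <= i).
Proof.
by case: (boolP (letter last_rank)) => [/threshold_last_b|/threshold_last_a]; apply.
Qed.

Lemma T_rotation : T = rotation_word n d (rank 0).
Proof.
apply: (@eq_from_nth _ false); first by rewrite size_mkseq.
move=> q; rewrite size_T => Hq.
rewrite nth_mkseq // -letter_threshold ?ltn_mod ?n_gt0 //.
by rewrite /letter pos_shift_iter pos_rank ?n_gt0 // add0n modn_small.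
Qed.

End APSuffixArray.

Theorem mainTheorem15 (n k : nat) (T : seq bool) (P : seq nat) :
  2 <= n -> size T = n ->
  is_suffix_array T P -> is_AP_perm n k P ->
  P <> rev (iota 1 n) -> nth 0 P 0 <> k.+1 ->
  balanced T.
Proof.
move=> n_ge2 size_T SA AP P_not_rev P0_neq.
rewrite (T_rotation n_ge2 size_T SA AP P0_neq P_not_rev).
exact: rotation_word_balanced (d_lt n_ge2 AP).
Qed.
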